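(* Let $(\Sigma_+,\Sigma_-,N_1,N_2,N_3)$ be a solution of the Wainwright–Hsu system satisfying the constraint, with $N_1=0$, $N_2>0$, $N_3<0$, and define for $i=1,2,3$ $$a_i(\tau)=\exp\Big(-\int_0^\tau(3\Sigma_i(s)+1)\,ds\Big),$$ where $\Sigma_1=-\frac23\Sigma_+$, $\Sigma_2=\frac13\Sigma_++\frac1{\sqrt3}\Sigma_-$, $\Sigma_3=\frac13\Sigma_+-\frac1{\sqrt3}\Sigma_-$. Then $a_i(\tau)\to0$ as $\tau\to\infty$ for $i=1,2,3$.
   Context: Wainwright–Hsu system: for functions $N_1,N_2,N_3,\Sigma_+,\Sigma_-$ of $\tau\in\mathbb{R}$ (prime denotes $d/d\tau$), $N_1'=(q-4\Sigma_+)N_1$, $N_2'=(q+2\Sigma_++2\sqrt3\Sigma_-)N_2$, $N_3'=(q+2\Sigma_+-2\sqrt3\Sigma_-)N_3$, $\Sigma_+'=-(2-q)\Sigma_+-3S_+$, $\Sigma_-'=-(2-q)\Sigma_--3S_-$, where $q=2(\Sigma_+^2+\Sigma_-^2)$, $S_+=\frac12[(N_2-N_3)^2-N_1(2N_1-N_2-N_3)]$, $S_-=\frac{\sqrt3}{2}(N_3-N_2)(N_1-N_2-N_3)$, together with the constraint $\Sigma_+^2+\Sigma_-^2+\frac34[N_1^2+N_2^2+N_3^2-2(N_1N_2+N_2N_3+N_1N_3)]=1$. (Geometrically, the spacetime metric is $-dt^2+\sum_i a_i^{-2}\xi^i\otimes\xi^i$ with $\xi^i$ a left-invariant coframe and $dt/d\tau=3/\theta$.)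 *)

From Stdlib Require Import Reals.
From Coquelicot Require Import Coquelicot.
Open Scope R_scope.

Definition WH_q (Sp Sm : R) : R := 2 * (Sp ^ 2 + Sm ^ 2).

Definition WH_Splus (N1 N2 N3 : R) : R :=
  / 2 * ((N2 - N3) ^ 2 - N1 * (2 * N1 - N2 - N3)).

Definition WH_Sminus (N1 N2 N3 : R) : R :=
  sqrt 3 / 2 * (N3 - N2) * (N1 - N2 - N3).

Definition WH_solution (N1 N2 N3 Sp Sm : R -> R) : Prop :=
  forall t : R,
    let q := WH_q (Sp t) (Sm t) in
    is_derive N1 t ((q - 4 * Sp t) * N1 t) /\
    is_derive N2 t ((q + 2 * Sp t + 2 * sqrt 3 * Sm t) * N2 t) /\
    is_derive N3 t ((q + 2 * Sp t - 2 * sqrt 3 * Sm t) * N3 t) /\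
    is_derive Sp t (- (2 - q) * Sp t - 3 * WH_Splus (N1 t) (N2 t) (N3 t)) /\
    is_derive Sm t (- (2 - q) * Sm t - 3 * WH_Sminus (N1 t) (N2 t) (N3 t)) /\
    Sp t ^ 2 + Sm t ^ 2
      + 3 / 4 * (N1 t ^ 2 + N2 t ^ 2 + N3 t ^ 2
                 - 2 * (N1 t * N2 t + N2 t * N3 t + N1 t * N3 t)) = 1.

Definition WH_Sigma (i : nat) (Sp Sm : R) : R :=
  match i with
  | 1%nat => - (2 / 3) * Sp
  | 2%nat => / 3 * Sp + / sqrt 3 * Sm
  | _ => / 3 * Sp - / sqrt 3 * Sm
  end.

Definition WH_a (i : nat) (Sp Sm : R -> R) (tau : R) : R :=
  exp (- RInt (fun s => 3 * WH_Sigma i (Sp s) (Sm s) + 1) 0 tau).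

(** With [N1 = 0] the constraint reads [Sp^2 + Sm^2 + 3/4 (N2 - N3)^2 = 1], so
    [x := 1 + Sp > 0] and [(ln x)' = -3/2 (N2 - N3)^2].  The quantities
    [W := ln (N2 |N3| / x^2)] and [V := W + ln x] satisfy [W' = 4 x] and
    [V' = 4 x - 3/2 (N2 - N3)^2 >= 0]; hence [(exp W)' = 4 exp V >= 4 exp (V 0)],
    so [exp W] grows at least linearly and [W -> +oo].  Each integrand
    [3 Sigma_i + 1] is an exact derivative: of [3 tau - W/2] for [i = 1] and of
    [(ln N2 - ln x)/2] for [i = 2], and both primitives are bounded below by
    increasing functions tending to [+oo] (using [ln x >= ln x(0) - 2 tau] and
    the AM-GM type bounds [N2 |N3| <= 2/3 x] and [N3^2 <= 8/3 x]).  The case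
    [i = 3] follows from [i = 2] by the symmetry of the system exchanging the
    second and third axes. *)

From Stdlib Require Import Reals Lra Lia.
From Coquelicot Require Import Coquelicot.
Open Scope R_scope.

Ltac R_module_ops := unfold minus, plus, opp, scal; simpl; unfold mult, zero, one; simpl.

Lemma is_derive_val (f : R -> R) (t l l' : R) :
  is_derive f t l -> l = l' -> is_derive f t l'.
Proof. intros Hf <-; exact Hf. Qed.

Lemma is_derive_ln_pos (f : R -> R) (t df : R) :
  0 < f t -> is_derive f t df -> is_derive (fun s => ln (f s)) t (df / f t).
Proof.
  intros Hpos Hf.
  eapply is_derive_val; [apply (is_derive_comp ln f t (/ f t) df), Hf|].
  - now apply is_derive_ln.
  - R_module_ops. reflexivity.
Qed.

Lemma le_of_is_derive_nonneg (g dg : R -> R) (a b : R) :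
  (forall t, is_derive g t (dg t)) -> (forall t, a <= t <= b -> 0 <= dg t) ->
  a <= b -> g a <= g b.
Proof.
  intros Hd Hpos Hab.
  destruct (MVT_gen g a b dg) as [c [Hc E]].
  - intros; apply Hd.
  - intros y _. apply continuity_pt_filterlim, (ex_derive_continuous g y).
    eexists; apply Hd.
  - rewrite Rmin_left in Hc by lra. rewrite Rmax_right in Hc by lra.
    assert (0 <= dg c) by (apply Hpos; lra). nra.
Qed.

Lemma RInt_of_is_derive (F f : R -> R) (a b : R) :
  (forall t, is_derive F t (f t)) -> (forall t, continuous f t) ->
  RInt f a b = F b - F a.
Proof.
  intros HF Hf. apply is_RInt_unique, (is_RInt_derive F f a b); auto.
Qed.

Lemma is_lim_affine_p_infty (f : R -> R) (c k : R) :
  0 < k -> is_lim f p_infty p_infty ->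
  is_lim (fun t => c + k * f t) p_infty p_infty.
Proof.
  intros Hk Hf. apply is_lim_spec in Hf. apply is_lim_spec. intro M.
  destruct (Hf ((M - c) / k)) as [T HT]. exists T. intros t Ht.
  specialize (HT t Ht).
  apply (Rmult_lt_compat_l k) in HT; [|exact Hk].
  replace (k * ((M - c) / k)) with (M - c) in HT by (field; lra). lra.
Qed.

Lemma is_lim_exp_opp_p_infty (F : R -> R) :
  is_lim F p_infty p_infty -> is_lim (fun t => exp (- F t)) p_infty 0.
Proof.
  intro HF. apply (is_lim_comp exp (fun t => - F t) p_infty 0 m_infty).
  - apply is_lim_exp_m.
  - apply (is_lim_opp F p_infty p_infty HF).
  - exists 0. intros t _. discriminate.
Qed.

Lemma is_lim_RInt_p_infty (F f : R -> R) :
  (forall t, is_derive F t (f t)) -> (forall t, continuous f t) ->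
  is_lim F p_infty p_infty ->
  is_lim (fun tau => RInt f 0 tau) p_infty p_infty.
Proof.
  intros HF Hf Hlim.
  apply (is_lim_ext (fun tau => - F 0 + 1 * F tau)).
  - intro tau. rewrite (RInt_of_is_derive F f) by auto. ring.
  - apply is_lim_affine_p_infty; [lra | exact Hlim].
Qed.

Lemma inv_sqrt3 : / sqrt 3 = sqrt 3 / 3.
Proof.
  assert (H := sqrt_sqrt 3 ltac:(lra)). assert (Hp := sqrt_lt_R0 3 ltac:(lra)).
  field_simplify_eq; lra.
Qed.

Lemma WH_solution_reflect (N1 N2 N3 Sp Sm : R -> R) :
  WH_solution N1 N2 N3 Sp Sm ->
  WH_solution (fun t => - N1 t) (fun t => - N3 t) (fun t => - N2 t) Sp
    (fun t => - Sm t).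
Proof.
  intros sol t. destruct (sol t) as (d1 & d2 & d3 & dp & dm & c).
  unfold WH_q, WH_Splus, WH_Sminus in *.
  repeat match goal with |- _ /\ _ => split end.
  - eapply is_derive_val; [apply (is_derive_opp (V:=R_NormedModule)), d1|].
    R_module_ops; ring.
  - eapply is_derive_val; [apply (is_derive_opp (V:=R_NormedModule)), d3|].
    R_module_ops; ring.
  - eapply is_derive_val; [apply (is_derive_opp (V:=R_NormedModule)), d2|].
    R_module_ops; ring.
  - eapply is_derive_val; [exact dp|]. ring.
  - eapply is_derive_val; [apply (is_derive_opp (V:=R_NormedModule)), dm|].
    R_module_ops; ring.
  - rewrite <- c. ring.
Qed.

Section Vanishing_N1.

Variables N1 N2 N3 Sp Sm : R -> R.
Hypothesis sol : WH_solution N1 N2 N3 Sp Sm.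
Hypothesis N1_0 : forall t, N1 t = 0.
Hypothesis N2_pos : forall t, 0 < N2 t.
Hypothesis N3_neg : forall t, N3 t < 0.

Lemma Sm_sq t : Sm t ^ 2 = 1 - Sp t ^ 2 - 3 / 4 * (N2 t - N3 t) ^ 2.
Proof.
  destruct (sol t) as (_ & _ & _ & _ & _ & c). rewrite N1_0 in c.
  rewrite <- c; ring.
Qed.

Lemma one_plus_Sp_pos t : 0 < 1 + Sp t.
Proof.
  pose proof (Sm_sq t). pose proof (N2_pos t). pose proof (N3_neg t).
  assert (0 < (N2 t - N3 t) ^ 2) by nra. nra.
Qed.

Lemma N_diff_sq_le_one_plus_Sp t : 3 / 4 * (N2 t - N3 t) ^ 2 <= 2 * (1 + Sp t).
Proof. pose proof (Sm_sq t). pose proof (one_plus_Sp_pos t). nra. Qed.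

Lemma N_diff_sq_le t : (N2 t - N3 t) ^ 2 <= 4 / 3.
Proof. pose proof (Sm_sq t). nra. Qed.

Lemma is_derive_Sp t : is_derive Sp t (- (3 / 2) * (N2 t - N3 t) ^ 2 * (1 + Sp t)).
Proof.
  destruct (sol t) as (_ & _ & _ & dp & _).
  eapply is_derive_val; [exact dp|].
  unfold WH_q, WH_Splus. rewrite N1_0, Sm_sq. field.
Qed.

Lemma is_derive_ln_one_plus_Sp t :
  is_derive (fun s => ln (1 + Sp s)) t (- (3 / 2) * (N2 t - N3 t) ^ 2).
Proof.
  eapply is_derive_val.
  - apply is_derive_ln_pos; [apply one_plus_Sp_pos|].
    apply (is_derive_plus (V:=R_NormedModule));
      [apply (is_derive_const (V:=R_NormedModule)) | apply is_derive_Sp].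
  - pose proof (one_plus_Sp_pos t). R_module_ops. field. lra.
Qed.

Lemma is_derive_ln_N2 t :
  is_derive (fun s => ln (N2 s)) t
    (2 + 2 * Sp t + 2 * sqrt 3 * Sm t - 3 / 2 * (N2 t - N3 t) ^ 2).
Proof.
  destruct (sol t) as (_ & d2 & _).
  eapply is_derive_val; [apply is_derive_ln_pos; [apply N2_pos | exact d2]|].
  pose proof (N2_pos t).
  unfold WH_q. rewrite Sm_sq. field. lra.
Qed.

Lemma is_derive_ln_opp_N3 t :
  is_derive (fun s => ln (- N3 s)) t
    (2 + 2 * Sp t - 2 * sqrt 3 * Sm t - 3 / 2 * (N2 t - N3 t) ^ 2).
Proof.
  destruct (sol t) as (_ & _ & d3 & _).
  pose proof (N3_neg t).
  eapply is_derive_val;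
    [apply is_derive_ln_pos; [lra | apply (is_derive_opp (V:=R_NormedModule)), d3]|].
  unfold WH_q. rewrite Sm_sq. R_module_ops. field. lra.
Qed.

Definition W t := ln (N2 t) + ln (- N3 t) - 2 * ln (1 + Sp t).
Definition V t := ln (1 + Sp t) + W t.

Lemma is_derive_W t : is_derive W t (4 * (1 + Sp t)).
Proof.
  eapply is_derive_val.
  - apply (is_derive_minus (V:=R_NormedModule)).
    + apply (is_derive_plus (V:=R_NormedModule));
        [apply is_derive_ln_N2 | apply is_derive_ln_opp_N3].
    + apply is_derive_scal, is_derive_ln_one_plus_Sp.
  - R_module_ops. ring.
Qed.

Lemma V_nondecreasing t : 0 <= t -> V 0 <= V t.
Proof.
  apply (le_of_is_derive_nonneg V
    (fun s => - (3 / 2) * (N2 s - N3 s) ^ 2 + 4 * (1 + Sp s))).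
  - intro s. apply (is_derive_plus (V:=R_NormedModule));
      [apply is_derive_ln_one_plus_Sp | apply is_derive_W].
  - intros s _. pose proof (N_diff_sq_le_one_plus_Sp s). lra.
Qed.

Lemma exp_W_ge_linear t :
  0 <= t -> exp (W 0) + 4 * exp (V 0) * t <= exp (W t).
Proof.
  intro Ht.
  cut (exp (W 0) - 4 * exp (V 0) * 0 <= exp (W t) - 4 * exp (V 0) * t); [lra|].
  apply (le_of_is_derive_nonneg (fun s => exp (W s) - 4 * exp (V 0) * s)
    (fun s => 4 * (exp (V s) - exp (V 0)))); [|intros s [Hs _]|exact Ht].
  - intro s. eapply is_derive_val.
    + apply (is_derive_minus (V:=R_NormedModule)).
      * apply (is_derive_comp exp W s (exp (W s)));
          [apply is_derive_exp | apply is_derive_W].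
      * apply is_derive_scal, (is_derive_id (K:=R_AbsRing)).
    + unfold V. rewrite !exp_plus, !exp_ln by apply one_plus_Sp_pos.
      R_module_ops. ring.
  - assert (exp (V 0) <= exp (V s)).
    { destruct (V_nondecreasing s Hs) as [Hlt|Heq];
        [left; now apply exp_increasing | now rewrite Heq; right]. }
    lra.
Qed.

Lemma W_p_infty : is_lim W p_infty p_infty.
Proof.
  pose proof (exp_pos (W 0)). pose proof (exp_pos (V 0)).
  apply (is_lim_le_p_loc (fun t => ln (exp (W 0) + 4 * exp (V 0) * t))).
  - exists 0. intros t Ht. rewrite <- (ln_exp (W t)).
    apply ln_le; [nra | apply exp_W_ge_linear; lra].
  - apply (is_lim_comp ln (fun t => exp (W 0) + 4 * exp (V 0) * t)
      p_infty p_infty p_infty).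
    + apply is_lim_ln_p.
    + apply is_lim_affine_p_infty; [lra | apply is_lim_id].
    + exists 0. intros t _. discriminate.
Qed.

Lemma W_le t : W t <= ln (2 / 3) - ln (1 + Sp t).
Proof.
  unfold W. pose proof (N2_pos t). pose proof (N3_neg t).
  pose proof (one_plus_Sp_pos t). pose proof (N_diff_sq_le_one_plus_Sp t).
  assert (ln (N2 t * - N3 t) <= ln (2 / 3 * (1 + Sp t))).
  { pose proof (pow2_ge_0 (N2 t + N3 t)). apply ln_le; nra. }
  rewrite !ln_mult in * by lra. lra.
Qed.

Lemma ln_one_plus_Sp_ge t : 0 <= t -> ln (1 + Sp 0) - 2 * t <= ln (1 + Sp t).
Proof.
  intro Ht.
  cut (ln (1 + Sp 0) + 2 * 0 <= ln (1 + Sp t) + 2 * t); [lra|].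
  apply (le_of_is_derive_nonneg (fun s => ln (1 + Sp s) + 2 * s)
    (fun s => - (3 / 2) * (N2 s - N3 s) ^ 2 + 2 * 1)); [|intros s _|exact Ht].
  - intro s. apply (is_derive_plus (V:=R_NormedModule));
      [apply is_derive_ln_one_plus_Sp |
       apply is_derive_scal, (is_derive_id (K:=R_AbsRing))].
  - pose proof (N_diff_sq_le s). lra.
Qed.

Lemma W_add_V_le t :
  W t + V t - ln (8 / 3) <= 2 * (ln (N2 t) - ln (1 + Sp t)).
Proof.
  unfold V, W. pose proof (N2_pos t). pose proof (N3_neg t).
  pose proof (one_plus_Sp_pos t). pose proof (N_diff_sq_le_one_plus_Sp t).
  assert (ln (- N3 t * - N3 t) <= ln (8 / 3 * (1 + Sp t))) by (apply ln_le; nra).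
  rewrite !ln_mult in * by lra. lra.
Qed.

Lemma continuous_Sigma_integrand i t :
  continuous (fun s => 3 * WH_Sigma i (Sp s) (Sm s) + 1) t.
Proof.
  destruct (sol t) as (_ & _ & _ & dp & dm & _).
  assert (cSp : continuous Sp t)
    by (apply (ex_derive_continuous (V:=R_NormedModule)); eexists; exact dp).
  assert (cSm : continuous Sm t)
    by (apply (ex_derive_continuous (V:=R_NormedModule)); eexists; exact dm).
  apply (continuous_plus (V:=R_NormedModule)); [|apply continuous_const].
  apply (continuous_mult (K:=R_AbsRing)); [apply continuous_const|].
  destruct i as [|[|[|i]]]; simpl;
    [apply (continuous_minus (V:=R_NormedModule)) | |
     apply (continuous_plus (V:=R_NormedModule)) |
     apply (continuous_minus (V:=R_NormedModule))];
    try apply (continuous_mult (K:=R_AbsRing)); auto; apply continuous_const.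
Qed.

Lemma RInt_Sigma1_p_infty :
  is_lim (fun tau => RInt (fun s => 3 * WH_Sigma 1 (Sp s) (Sm s) + 1) 0 tau)
    p_infty p_infty.
Proof.
  apply (is_lim_RInt_p_infty (fun s => 3 * s - / 2 * W s));
    [|apply continuous_Sigma_integrand|].
  - intro s. eapply is_derive_val.
    + apply (is_derive_minus (V:=R_NormedModule));
        [apply is_derive_scal, (is_derive_id (K:=R_AbsRing)) |
         apply is_derive_scal, is_derive_W].
    + R_module_ops. field.
  - apply (is_lim_le_p_loc (fun t => / 2 * (ln (1 + Sp 0) - ln (2 / 3)) + 2 * t)).
    + exists 0. intros t Ht.
      pose proof (W_le t). pose proof (ln_one_plus_Sp_ge t). lra.
    + apply is_lim_affine_p_infty; [lra | apply is_lim_id].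
Qed.

Lemma RInt_Sigma2_p_infty :
  is_lim (fun tau => RInt (fun s => 3 * WH_Sigma 2 (Sp s) (Sm s) + 1) 0 tau)
    p_infty p_infty.
Proof.
  apply (is_lim_RInt_p_infty (fun s => / 2 * (ln (N2 s) - ln (1 + Sp s))));
    [|apply continuous_Sigma_integrand|].
  - intro s. eapply is_derive_val.
    + apply is_derive_scal, (is_derive_minus (V:=R_NormedModule));
        [apply is_derive_ln_N2 | apply is_derive_ln_one_plus_Sp].
    + R_module_ops. rewrite inv_sqrt3. field.
  - apply (is_lim_le_p_loc (fun t => / 4 * (V 0 - ln (8 / 3)) + / 4 * W t)).
    + exists 0. intros t Ht.
      pose proof (W_add_V_le t). pose proof (V_nondecreasing t). lra.
    + apply is_lim_affine_p_infty; [lra | apply W_p_infty].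
Qed.

End Vanishing_N1.

Theorem mainTheorem18 (N1 N2 N3 Sp Sm : R -> R) :
  WH_solution N1 N2 N3 Sp Sm ->
  (forall t, N1 t = 0) ->
  (forall t, 0 < N2 t) ->
  (forall t, N3 t < 0) ->
  forall i : nat, (1 <= i <= 3)%nat ->
    is_lim (WH_a i Sp Sm) p_infty 0.
Proof.
  intros sol N1_0 N2_pos N3_neg i Hi.
  unfold WH_a. apply is_lim_exp_opp_p_infty.
  destruct i as [|[|[|[|i]]]]; try lia.
  - now apply (RInt_Sigma1_p_infty N1 N2 N3).
  - now apply (RInt_Sigma2_p_infty N1 N2 N3).
  - apply (is_lim_ext (fun tau =>
      RInt (fun s => 3 * WH_Sigma 2 (Sp s) (- Sm s) + 1) 0 tau)).
    + intro tau. apply RInt_ext. intros s _. simpl. ring.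
    + apply (RInt_Sigma2_p_infty (fun t => - N1 t) (fun t => - N3 t) (fun t => - N2 t)).
      * now apply WH_solution_reflect.
      * intro t. rewrite N1_0. ring.
      * intro t. specialize (N3_neg t). lra.
      * intro t. specialize (N2_pos t). lra.
Qed.
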